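(* Let $G=(V,E)$ be a simple undirected graph, let $S_1,\ldots,S_k\subseteq E$, and let $b\in V$. Assign to every edge $e\in E$ an indeterminate $x_e$, and work in the polynomial ring $\mathbb{F}[x_e : e\in E]$ over a field $\mathbb{F}$ of characteristic $2$. For $l\ge 1$, let $\hat T_b(l)$ be the sum, over all admissible closed walks of length $l$ at $b$, of the weight of the walk, where: - a closed walk of length $l$ at $b$ is a sequence of vertices $b=v_0,v_1,\ldots,v_l=b$ with $\{v_{j-1},v_j\}\in E$ for all $j$ (vertices and edges may repeat), and its weight is $\prod_{j=1}^{l} x_{\{v_{j-1},v_j\}}$; - the walk is admissible if its first edge $\{v_0,v_1\}$ lies in $S_1$, and for every $i\in\{1,\ldots,k\}$ there is exactly one index $j\in\{1,\ldots,l\}$ with $\{v_{j-1},v_j\}\in S_i$. Suppose there exists a simple cycle in $G$ that contains exactly one edge of each $S_i$ and passes through an edge of $S_1$ having $b$ as an endpoint, and let $L$ be the minimum length of such a cycle. Then $\hat T_b(L)$ is a homogeneous polynomial of degree $L$ that is not identically zero, and $\hat T_b(l)$ is identically zero for every $l<L$.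
   Context: A simple cycle of length $L$ is a closed walk $v_0,\ldots,v_L=v_0$ with $v_0,\ldots,v_{L-1}$ pairwise distinct and $L\ge 3$; it ''contains exactly one edge of $S_i$'' if exactly one of its $L$ edges lies in $S_i$. *)

From HB Require Import structures.
From mathcomp Require Import all_boot all_order all_algebra.
From mathcomp Require Export mpoly.
Set Implicit Arguments. Unset Strict Implicit. Unset Printing Implicit Defensive.
Import GRing.Theory.
Local Open Scope ring_scope.

Section Walks.
Variable T : finType.

Definition edge_of (p : T * T) : {set T} := [set p.1; p.2].

(* edges of the walk b = v_0, v_1, ..., v_l, where w = [:: v_1; ...; v_l] *)
Definition walk_edges (b : T) (w : seq T) : seq {set T} :=
  map edge_of (zip (b :: w) w).

(* edges of the cyclic sequence c = [:: v_0; ...; v_{L-1}] (closing edge included) *)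
Definition cycle_edges (c : seq T) : seq {set T} :=
  if c is x :: s then walk_edges x (rcons s x) else [::].

Definition simple_cycle (E : {set {set T}}) (c : seq T) : Prop :=
  [/\ 3 <= size c, uniq c & all (fun e => e \in E) (cycle_edges c)]%N.

Definition closed_walk (E : {set {set T}}) (b : T) (l : nat) (w : seq T) : bool :=
  [&& size w == l, last b w == b & all (fun e => e \in E) (walk_edges b w)].

(* admissibility w.r.t. S_1, ..., S_k (indexed here by 'I_k.+1, S_1 = S ord0) *)
Definition admissible k (S : 'I_k.+1 -> {set {set T}}) (b : T) (w : seq T) : bool :=
  (nth set0 (walk_edges b w) 0 \in S ord0) &&
  [forall i, count (fun e => e \in S i) (walk_edges b w) == 1%N].

(* The variable x_e, for e a 2-subset of T; variables are indexed by all subsets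
   of T, those not in E are simply never used. *)
Definition xvar (F : ringType) (e : {set T}) : {mpoly F[#|{set T}|]} :=
  'X_(enum_rank e).

Definition walk_weight (F : ringType) (b : T) (w : seq T) : {mpoly F[#|{set T}|]} :=
  \prod_(e <- walk_edges b w) xvar F e.

Definition That (F : ringType) (E : {set {set T}}) k (S : 'I_k.+1 -> {set {set T}})
  (b : T) (l : nat) : {mpoly F[#|{set T}|]} :=
  \sum_(w : l.-tuple T | closed_walk E b l w && admissible S b w) walk_weight F b w.

End Walks.

(* Traverse a shortest admissible cycle from b, starting along its edge of S_1.
   Any admissible closed walk with the same multiset of edges has to leave b
   along that edge, the only one of S_1 on the cycle, and then retrace the
   cycle; so the monomial of the cycle has coefficient 1 in \hat T_b(L).
   For l < L, the admissible closed walks b, v_1, ..., v_l = b are paired off by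
   a weight-preserving involution: find in v_1, ..., v_l the first vertex x
   that recurs and reverse the closed subwalk between its first two
   occurrences, unless that subwalk is a palindrome, in which case continue
   the search after the second occurrence. As b = v_0 is never part of the
   search, the first edge is kept, and so is admissibility. In characteristic 2
   the pairs cancel. A walk fixed by the involution is a simple closed walk
   from b through the same first edge, with palindromic loops hung on it; each
   loop uses every edge an even number of times, so that simple walk is an
   admissible cycle of length at most l < L, which is impossible. *)

From HB Require Import structures.
From mathcomp Require Import all_boot all_order all_algebra.
From mathcomp Require Import mpoly zify.
Import GRing.Theory.

Set Implicit Arguments.
Unset Strict Implicit.
Unset Printing Implicit Defensive.

Section Walks.
Variable T : finType.
Implicit Types (x y z : T) (s m r t w q c : seq T).

Lemma walk_edges_cons y x s : walk_edges y (x :: s) = edge_of (y, x) :: walk_edges x s.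
Proof. by []. Qed.

Lemma size_walk_edges y s : size (walk_edges y s) = size s.
Proof. by elim: s y => // x s IHs y; rewrite walk_edges_cons /= IHs. Qed.

Lemma walk_edges_cat y s1 s2 :
  walk_edges y (s1 ++ s2) = walk_edges y s1 ++ walk_edges (last y s1) s2.
Proof. by elim: s1 y => //= x s IHs y; rewrite !walk_edges_cons IHs. Qed.

Lemma walk_edges_rcons y s x :
  walk_edges y (rcons s x) = rcons (walk_edges y s) (edge_of (last y s, x)).
Proof. by rewrite -cats1 walk_edges_cat cats1. Qed.

Lemma edge_ofC x y : edge_of (x, y) = edge_of (y, x).
Proof. by rewrite /edge_of setUC. Qed.

Lemma walk_edges_rev y s :
  walk_edges (last y s) (rev (belast y s)) = rev (walk_edges y s).
Proof.
elim: s y => //= z s IHs y.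
rewrite walk_edges_cons !rev_cons -IHs walk_edges_rcons edge_ofC.
by case: s {IHs} => //= a s; rewrite rev_cons last_rcons.
Qed.

Lemma walk_edges_rev_loop x m :
  walk_edges x (rcons (rev m) x) = rev (walk_edges x (rcons m x)).
Proof. by rewrite -walk_edges_rev last_rcons belast_rcons rev_cons. Qed.

Lemma mem_walk_edges y s e v : e \in walk_edges y s -> v \in e -> v \in y :: s.
Proof.
elim: s y => //= z s IHs y; rewrite walk_edges_cons inE => /orP[/eqP-> | /IHs].
  by rewrite !inE => /orP[] ->; rewrite ?orbT.
by move=> /[apply] vs; rewrite inE vs orbT.
Qed.

Lemma walk_edges_card2 y s :
  all (fun e : {set T} => #|e| == 2) (walk_edges y s) = path (fun u v => u != v) y s.
Proof.
elim: s y => // z s IHs y; rewrite walk_edges_cons /= IHs /edge_of cards2.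
by case: (y != z).
Qed.

(* [n] is fuel: [size s <= n] is enough. *)
Fixpoint flip_loop n s :=
  if n is n'.+1 then
    if s is x :: s' then
      if x \in s' then
        let m := take (index x s') s' in
        let r := drop (index x s').+1 s' in
        if rev m == m then x :: m ++ flip_loop n' (x :: r)
        else x :: rev m ++ x :: r
      else x :: flip_loop n' s'
    else s
  else s.

Lemma split_first x s : x \in s -> exists2 m, x \notin m & exists r, s = m ++ x :: r.
Proof.
move=> xs; exists (take (index x s) s); first by rewrite in_take // ltnn.
by exists (drop (index x s).+1 s); rewrite -drop_index // cat_take_drop.
Qed.

Lemma flip_loop_fresh n x s :
  x \notin s -> flip_loop n.+1 (x :: s) = x :: flip_loop n s.
Proof. by move=> /= /negbTE ->. Qed.

Lemma flip_loop_loop n x m r : x \notin m ->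
  flip_loop n.+1 (x :: m ++ x :: r) =
  if rev m == m then x :: m ++ flip_loop n (x :: r) else x :: rev m ++ x :: r.
Proof.
move=> xm /=; rewrite mem_cat mem_head orbT take_pivot // index_pivot //.
by rewrite -cat_rcons drop_size_cat ?size_rcons.
Qed.

Lemma flip_loop_cons n x s : exists t, flip_loop n (x :: s) = x :: t.
Proof. by case: n => [|n] /=; [|case: ifP => _; [case: ifP => _|]]; eexists. Qed.

Lemma perm_flip_loop n s : perm_eq (flip_loop n s) s.
Proof.
elim: n s => [|n IHn] [|x s]; try exact: perm_refl.
have [/split_first[m xm [r ->]] | xs] := boolP (x \in s).
  rewrite flip_loop_loop //; case: ifP => _; rewrite perm_cons.
    by rewrite perm_cat2l IHn.
  by rewrite perm_cat2r perm_rev.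
by rewrite flip_loop_fresh // perm_cons IHn.
Qed.

Lemma size_flip_loop n s : size (flip_loop n s) = size s.
Proof. exact/perm_size/perm_flip_loop. Qed.

Lemma last_flip_loop n y s : last y (flip_loop n s) = last y s.
Proof.
elim: n s y => [|n IHn] [|x s] y //.
have [/split_first[m xm [r ->]] | xs] := boolP (x \in s).
  by rewrite flip_loop_loop //; case: ifP => _; rewrite /= !last_cat // IHn.
by rewrite flip_loop_fresh //= IHn.
Qed.

Lemma walk_edges_flip_loop n y s :
  perm_eq (walk_edges y (flip_loop n s)) (walk_edges y s).
Proof.
elim: n s y => [|n IHn] [|x s] y; try exact: perm_refl.
have [/split_first[m xm [r ->]] | xs] := boolP (x \in s); last first.
  by rewrite flip_loop_fresh // !walk_edges_cons perm_cons IHn.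
rewrite flip_loop_loop //; case: ifP => _; rewrite !walk_edges_cons perm_cons.
  by rewrite !walk_edges_cat perm_cat2l IHn.
rewrite -!cat_rcons !walk_edges_cat !last_rcons perm_cat2r.
by rewrite walk_edges_rev_loop perm_rev.
Qed.

Lemma flip_loopK n s : size s <= n -> flip_loop n (flip_loop n s) = s.
Proof.
elim: n s => [|n IHn] [|x s] // sz_s; have {}sz_s : size s <= n := sz_s.
have [/split_first[m xm [r def_s]] | xs] := boolP (x \in s); last first.
  by rewrite !flip_loop_fresh ?IHn // (perm_mem (perm_flip_loop n s)).
rewrite def_s flip_loop_loop //; case: ifP => pal.
  have [t def_t] := flip_loop_cons n x r.
  rewrite def_t flip_loop_loop // pal -def_t IHn //.
  by move: sz_s; rewrite def_s size_cat /=; lia.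
by rewrite flip_loop_loop ?mem_rev // revK eq_sym pal.
Qed.

Lemma closed_walk_flip_loop E b l n s :
  closed_walk E b l (flip_loop n s) = closed_walk E b l s.
Proof.
rewrite /closed_walk size_flip_loop last_flip_loop.
by rewrite (perm_all _ (walk_edges_flip_loop n b s)).
Qed.

Lemma admissible_flip_loop k (S : 'I_k.+1 -> {set {set T}}) b n s :
  admissible S b (flip_loop n s) = admissible S b s.
Proof.
have first_edge :
    nth set0 (walk_edges b (flip_loop n s)) 0 = nth set0 (walk_edges b s) 0.
  by case: s => [|x s]; [case: n | have [t ->] := flip_loop_cons n x s].
rewrite /admissible first_edge; congr (_ && _); apply: eq_forallb => i.
by rewrite (permP (walk_edges_flip_loop n b s)).
Qed.

Lemma walk_weight_flip_loop (F : comNzRingType) b n s :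
  walk_weight F b (flip_loop n s) = walk_weight F b s.
Proof. by rewrite /walk_weight (perm_big _ (walk_edges_flip_loop n b s)). Qed.

Lemma palindrome_loop_even x m : rev m = m ->
  path (fun u v => u != v) x (rcons m x) ->
  forall a, ~~ odd (count a (walk_edges x (rcons m x))).
Proof.
have [n] := ubnP (size m); elim: n x m => // n IHn x [|z m] sz_m pal.
  by rewrite /= eqxx.
case/lastP: m sz_m pal => [|v z'] sz_m.
  by move=> _ _ a; rewrite /= edge_ofC addn0 addnn odd_double.
rewrite rev_cons rev_rcons => -[def_z' /rcons_inj[pal_v _]]; subst z'.
rewrite rcons_cons [path _ x _]/= rcons_path => /andP[_ /andP[loop_v _]] a.
rewrite walk_edges_cons walk_edges_rcons last_rcons edge_ofC -cats1.
rewrite /= count_cat /= addn0 addnCA addnn oddD odd_double addbF IHn //.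
by move: sz_m; rewrite /= size_rcons ltnS => /ltnW.
Qed.

Lemma flip_loop_fixed_decomp n y x s : size s < n -> flip_loop n (x :: s) = x :: s ->
  path (fun u v => u != v) y (x :: s) ->
  exists t, [/\ uniq (x :: t), {subset t <= s}, last x t = last x s &
    exists2 D, perm_eq (walk_edges y (x :: s)) (walk_edges y (x :: t) ++ D) &
               forall a, ~~ odd (count a D)].
Proof.
elim: n x s y => // n IHn x s y.
case: (boolP (x \in s)) => [/split_first[m xm [r ->]] | xs] sz_s; last first.
  rewrite flip_loop_fresh // => -[fix_s].
  case: s => [|z s] in xs sz_s fix_s *.
    by exists [::]; split=> //; exists [::]; rewrite ?cats0.
  case/andP=> yx walk_s.
  have [t [uniq_t sub_t last_t [D perm_D even_D]]] := IHn z s x sz_s fix_s walk_s.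
  have sub_zt : {subset z :: t <= z :: s}.
    by move=> v; rewrite !inE => /orP[-> // | /sub_t ->]; rewrite orbT.
  exists (z :: t); split=> //.
  - by rewrite cons_uniq uniq_t andbT; apply: contra xs => /sub_zt.
  - exists D => //.
    by rewrite walk_edges_cons [walk_edges y _]walk_edges_cons cat_cons perm_cons.
rewrite flip_loop_loop //; case: ifP => [/eqP pal | npal]; last first.
  by case=> /eqP; rewrite eqseq_cat ?size_rev // npal.
case=> /(congr1 (drop (size m))); rewrite !drop_size_cat // => fix_r.
rewrite -cat_rcons [path _ y _]/= cat_path last_rcons.
case/and3P=> yx loop_m walk_r.
have sz_r : size r < n by move: sz_s; rewrite size_cat /=; lia.
have [t [uniq_t sub_t last_t [D perm_D even_D]]] := IHn x r y sz_r fix_r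
  (introT andP (conj yx walk_r)).
exists t; split=> //.
- by move=> v /sub_t; rewrite mem_cat => ->; rewrite orbT.
- by rewrite last_t last_cat last_rcons.
exists (D ++ walk_edges x (rcons m x)); last first.
  by move=> a; rewrite count_cat oddD (negbTE (even_D a)) palindrome_loop_even.
rewrite catA walk_edges_cons walk_edges_cat last_rcons.
apply: (@perm_trans _ ((edge_of (y, x) :: walk_edges x r) ++ walk_edges x (rcons m x))).
  by rewrite cat_cons perm_cons perm_catC.
by rewrite perm_cat2r -walk_edges_cons.
Qed.

Lemma size_cycle_edges c : size (cycle_edges c) = size c.
Proof. by case: c => //= x s; rewrite size_walk_edges size_rcons. Qed.

Lemma cycle_edges_rot1 c : cycle_edges (rot 1 c) = rot 1 (cycle_edges c).
Proof.
case: c => [|x [|y s]] //; rewrite rot1_cons rcons_cons.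
rewrite -[cycle_edges (y :: _)]/(walk_edges y (rcons (rcons s x) y)).
rewrite -[cycle_edges (x :: _)]/(edge_of (x, y) :: walk_edges y (rcons s x)).
by rewrite rot1_cons walk_edges_rcons last_rcons.
Qed.

Lemma cycle_edges_rot i c : cycle_edges (rot i c) = rot i (cycle_edges c).
Proof.
have [le_ic | lt_ci] := leqP i (size c); last first.
  by rewrite !rot_oversize ?size_cycle_edges // ltnW.
elim: i le_ic => [|i IHi] lt_ic; first by rewrite !rot0.
by rewrite rotS // cycle_edges_rot1 IHi 1?ltnW // -rotS ?size_cycle_edges.
Qed.

Lemma perm_walk_edges_uniq y q w : uniq (y :: q) ->
  path (fun u v => u != v) y w -> perm_eq (walk_edges y w) (walk_edges y q) ->
  w = q.
Proof.
elim: q y w => [|z q IHq] y [|v w] //; try by move=> _ _ /perm_size.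
rewrite cons_uniq => /andP[yNzq uniq_zq] /andP[yv walk_w].
rewrite !walk_edges_cons => perm_w.
have /predU1P[e_yv | ] : edge_of (y, v) \in edge_of (y, z) :: walk_edges z q.
- by rewrite -(perm_mem perm_w) mem_head.
- have : v \in edge_of (y, z) by rewrite -e_yv !inE eqxx orbT.
  rewrite !inE eq_sym (negbTE yv) /= => /eqP def_v; subst v.
  by rewrite (IHq z w) //; move: perm_w; rewrite perm_cons.
move=> /(@mem_walk_edges z q _ y) yzq; case/negP: yNzq; apply: yzq.
by rewrite !inE eqxx.
Qed.

End Walks.

Section AdmissibleCycles.
Variables (T : finType) (E : {set {set T}}) (k : nat) (S : 'I_k.+1 -> {set {set T}}).
Variable b : T.
Hypothesis E2 : forall e, e \in E -> #|e| = 2.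
Implicit Types (x y z : T) (s t w c : seq T).

Definition admissible_cycle c :=
  [/\ simple_cycle E c,
      forall i, count (fun e => e \in S i) (cycle_edges c) = 1 &
      exists2 e, e \in cycle_edges c & (e \in S ord0) && (b \in e)].

Lemma closed_walk_path l w : closed_walk E b l w -> path (fun u v => u != v) b w.
Proof.
by case/and3P=> _ _ wE; rewrite -walk_edges_card2; apply/allP => e /(allP wE) /E2 ->.
Qed.

Lemma admissible_walk_cycle l w : uniq w -> closed_walk E b l w ->
  admissible S b w -> exists2 c, admissible_cycle c & size c = l.
Proof.
case: w => [|x t] uniq_w /and3P[/eqP <- /eqP last_t wE] /andP[w0 /forallP wS].
  by have := wS ord0.
have {}last_t : last x t = b := last_t.
have {}w0 : edge_of (b, x) \in S ord0 := w0.
exists (b :: belast x t); last by rewrite /= size_belast.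
have cycle_w : cycle_edges (b :: belast x t) = walk_edges b (x :: t).
  by rewrite [x :: t]lastI last_t.
split.
- split; last by rewrite cycle_w.
    case: t => [|z [|z' t]] in uniq_w last_t wE wS cycle_w * => //=.
      by move: wE; rewrite /= andbT -last_t => /E2; rewrite /edge_of setUid cards1.
    move: (wS ord0); rewrite /= -[z]/(last x [:: z]) last_t.
    by rewrite [edge_of (x, b)]edge_ofC w0.
  by rewrite cons_uniq -rcons_uniq -last_t -lastI.
- by move=> i; rewrite cycle_w; apply/eqP.
- exists (edge_of (b, x)); last by rewrite w0 !inE eqxx.
  by rewrite [cycle_edges _]cycle_w walk_edges_cons mem_head.
Qed.

Lemma admissible_cycle_walk c : admissible_cycle c ->
  exists2 w, closed_walk E b (size c) w & admissible S b w && uniq w.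
Proof.
case=> [[size_c uniq_c cE] cS [e e_c /andP[e_S0 b_e]]].
suff [w [perm_w uniq_w last_w w0]] : exists w,
    [/\ perm_eq (walk_edges b w) (cycle_edges c), uniq w, last b w = b &
        nth set0 (walk_edges b w) 0 = e].
  exists w; last first.
    rewrite uniq_w andbT /admissible w0 e_S0.
    by apply/forallP => i; rewrite (permP perm_w) cS.
  rewrite /closed_walk last_w (perm_all _ perm_w) cE -[size c]size_cycle_edges.
  by rewrite -(perm_size perm_w) size_walk_edges !eqxx.
(* Rotate [c] so that [e] comes first, then run through it starting from [b]. *)
have [i es rot_e] := rot_to e_c; rewrite -cycle_edges_rot in rot_e.
have: 3 <= size (rot i c) by rewrite size_rot.
have: uniq (rot i c) by rewrite rot_uniq.
have: perm_eq (cycle_edges (rot i c)) (cycle_edges c).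
  by rewrite cycle_edges_rot perm_rot.
case: (rot i c) rot_e => [|x [|y t]] // [def_e _] perm_c uniq_c' _.
move: b_e; rewrite -def_e !inE /= => /orP[] /eqP def_b.
all: rewrite -{}def_b in perm_c uniq_c' *.
  exists (y :: rcons t b); split=> //; last by rewrite /= last_rcons.
  by rewrite -rcons_cons -rot1_cons rot_uniq.
exists (x :: rcons (rev t) b); split.
- apply: perm_trans perm_c; rewrite walk_edges_cons.
  rewrite -[cycle_edges _]/(edge_of (x, b) :: walk_edges b (rcons t x)).
  rewrite edge_ofC perm_cons -rev_cons -(belast_rcons b t x) -{1}(last_rcons b t x).
  by rewrite walk_edges_rev perm_rev.
- move: uniq_c'; rewrite !cons_uniq mem_rcons rcons_uniq !inE !mem_rev rev_uniq.
  by case/andP=> -> ->.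
- by rewrite /= last_rcons.
- exact: edge_ofC.
Qed.

Lemma admissible_walk_unique w w' : uniq w -> admissible S b w ->
  admissible S b w' -> path (fun u v => u != v) b w' ->
  perm_eq (walk_edges b w') (walk_edges b w) -> w' = w.
Proof.
case: w => [|x s] uniq_w /andP[w0 /forallP/(_ ord0)/eqP wS0]; first by [].
case: w' => [|x' s'] /andP[w'0 w'S]; first by move/forallP/(_ ord0): w'S.
case/andP=> bx' walk_s' perm_w.
(* The first edge of [w] is its only edge in [S ord0]. *)
have e_bx' : edge_of (b, x') = edge_of (b, x).
  have /predU1P[// | e_s] : edge_of (b, x') \in edge_of (b, x) :: walk_edges x s.
    by rewrite -walk_edges_cons -(perm_mem perm_w) walk_edges_cons mem_head.
  have : has (fun e => e \in S ord0) (walk_edges x s).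
    by apply/hasP; exists (edge_of (b, x')).
  by rewrite has_count; move: wS0; rewrite walk_edges_cons -cat1s count_cat /= w0; lia.
have : x' \in edge_of (b, x) by rewrite -e_bx' !inE eqxx orbT.
rewrite !inE /= eq_sym (negbTE bx') /= => /eqP def_x'; subst x'.
congr cons; apply: (perm_walk_edges_uniq uniq_w walk_s').
by move: perm_w; rewrite !walk_edges_cons perm_cons.
Qed.

Lemma fixed_walk_cycle l w : closed_walk E b l w -> admissible S b w ->
  flip_loop l w = w -> exists2 c, admissible_cycle c & size c <= l.
Proof.
move=> closed_w /andP[w0 /forallP wS]; have walk_w := closed_walk_path closed_w.
case/and3P: closed_w => /eqP size_w /eqP last_w wE.
case: w => [|x s] in size_w last_w wE w0 wS walk_w *; first by have := wS ord0.
move=> fix_w; rewrite /= in last_w; have sz_s : size s < l by rewrite -size_w.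
have [t [uniq_t _ last_t [D perm_D even_D]]] :=
  flip_loop_fixed_decomp sz_s fix_w walk_w.
have [||c adm_c size_c] := @admissible_walk_cycle (size t).+1 (x :: t) uniq_t.
- apply/and3P; split=> //; first by rewrite /= last_t last_w.
  by apply/allP => e e_t; apply: (allP wE); rewrite (perm_mem perm_D) mem_cat e_t.
- apply/andP; split=> //; apply/forallP => i.
  have := eqP (wS i); rewrite (permP perm_D) count_cat.
  have := even_D (fun e => e \in S i).
  by case: (count _ D) => [|[|d]] //= _ cnt_s; apply/eqP; lia.
exists c => //; rewrite size_c -size_w.
by have := perm_size perm_D; rewrite size_cat !size_walk_edges /=; lia.
Qed.

End AdmissibleCycles.

Section WalkPolynomial.
Local Open Scope ring_scope.

Lemma sum_fixfree_involution (I : finType) (V : zmodType) (P : pred I)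
    (g : I -> I) (f : I -> V) :
  (forall v : V, v + v = 0) ->
  (forall i, P i -> [/\ P (g i), g (g i) = i, g i != i & f (g i) = f i]) ->
  \sum_(i | P i) f i = 0.
Proof.
(* [g] exchanges the [i] ranked below [g i] with those ranked above it. *)
move=> vv gP; pose lo i := (enum_rank i < enum_rank (g i))%N.
rewrite (bigID lo) /= [X in _ + X](reindex_onto g g); last first.
  by move=> i /andP[/gP[]].
rewrite [X in _ + X](eq_bigl (fun i => P i && lo i)) => [|i]; last first.
  apply/idP/idP => [/andP[/andP[Pgi nlo] /eqP ggi] | /andP[Pi lo_i]].
    have [+ _ + _] := gP _ Pgi; rewrite ggi => -> gi_neq /=.
    rewrite /lo ltn_neqAle (inj_eq (@ord_inj _)) (inj_eq enum_rank_inj).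
    rewrite gi_neq leqNgt.
    by rewrite /lo ggi in nlo.
  have [Pgi ggi _ _] := gP i Pi.
  by rewrite Pgi /lo ggi eqxx andbT -leqNgt ltnW.
by rewrite [X in _ + X](eq_bigr f) ?vv // => i /andP[/gP[]].
Qed.

Variables (F : comNzRingType) (T : finType).
Implicit Types (b : T) (w : seq T).

Definition walk_mnm b w : 'X_{1..#|{set T}|} :=
  (\sum_(e <- walk_edges b w) U_(enum_rank e))%MM.

Lemma walk_weightE b w : walk_weight F b w = 'X_[walk_mnm b w].
Proof. by rewrite /walk_weight /xvar /walk_mnm mprodXE. Qed.

Lemma mdeg_walk_mnm b w : mdeg (walk_mnm b w) = size w.
Proof.
rewrite /walk_mnm mdeg_sum (eq_bigr (fun _ => 1%N)) => [|e _]; last exact: mdeg1.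
by rewrite sum1_size size_walk_edges.
Qed.

Lemma walk_mnmE b w j :
  walk_mnm b w j = count_mem j (map enum_rank (walk_edges b w)).
Proof.
rewrite /walk_mnm; elim: (walk_edges b w) => [|e es IHes].
  by rewrite big_nil mnm0E.
by rewrite big_cons mnmDE mnm1E IHes.
Qed.

Lemma walk_mnm_perm b w w' : walk_mnm b w = walk_mnm b w' ->
  perm_eq (walk_edges b w) (walk_edges b w').
Proof.
move=> eq_mnm; apply: (perm_map_inj (@enum_rank_inj _)).
by apply/allP => j _ /=; rewrite -!walk_mnmE eq_mnm.
Qed.

Variables (E : {set {set T}}) (k : nat) (S : 'I_k.+1 -> {set {set T}}) (b : T).

Lemma That_homog l : That F E S b l \is l.-homog.
Proof.
apply: rpred_sum => t _; rewrite walk_weightE dhomogX.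
by apply/eqP; rewrite -[RHS](size_tuple t); apply: mdeg_walk_mnm.
Qed.

Hypothesis E2 : forall e, e \in E -> #|e| = 2%N.

Lemma That_neq0 c : admissible_cycle E S b c -> That F E S b (size c) != 0.
Proof.
move=> adm_c.
have [w0 closed_w0 /andP[adm_w0 uniq_w0]] := admissible_cycle_walk adm_c.
have size_w0 : size w0 == size c by case/and3P: closed_w0.
pose t0 : (size c).-tuple T := Tuple size_w0.
have coef_w0 : (That F E S b (size c))@_(walk_mnm b w0) = 1.
  rewrite /That raddf_sum (bigD1 t0) /=; last by rewrite closed_w0 adm_w0.
  rewrite walk_weightE mcoeffX eqxx big1 ?addr0 //.
  move=> t /andP[/andP[closed_t adm_t] t_neq].
  rewrite walk_weightE mcoeffX; case: eqP => // /walk_mnm_perm perm_t.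
  case/eqP: t_neq; apply: val_inj => /=.
  have walk_t := closed_walk_path E2 closed_t.
  exact: admissible_walk_unique uniq_w0 adm_w0 adm_t walk_t perm_t.
apply/eqP => That0; move: coef_w0; rewrite That0 mcoeff0 => /eqP.
by rewrite eq_sym oner_eq0.
Qed.

Hypothesis F2 : 2%N \in [pchar F].

Lemma That_eq0 L l : (forall c, admissible_cycle E S b c -> L <= size c)%N ->
  (l < L)%N -> That F E S b l = 0.
Proof.
move=> min_L lt_lL; pose g (t : l.-tuple T) := insubd t (flip_loop l t).
have val_g t : tval (g t) = flip_loop l t.
  by rewrite val_insubd size_flip_loop size_tuple eqxx.
apply: (sum_fixfree_involution (g := g)) => [p | t /andP[closed_t adm_t]].
  by rewrite -mulr2n -mulr_natr -mpolyC_nat (pcharf0 F2) mpolyC0 mulr0.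
rewrite /= !val_g closed_walk_flip_loop admissible_flip_loop closed_t adm_t.
split=> //; last exact: walk_weight_flip_loop.
  by apply: val_inj => /=; rewrite !val_g flip_loopK ?size_tuple.
apply/eqP => /(congr1 val) /=; rewrite val_g.
by case/(fixed_walk_cycle E2 closed_t adm_t) => c /min_L; lia.
Qed.

End WalkPolynomial.

Local Open Scope ring_scope.

Theorem mainTheorem2 (F : fieldType) (T : finType) (E : {set {set T}}) (k : nat)
  (S : 'I_k.+1 -> {set {set T}}) (b : T) (L : nat) :
  2%N \in [pchar F] ->
  (forall e, e \in E -> #|e| = 2%N) ->
  (forall i, S i \subset E) ->
  let good (c : seq T) :=
    [/\ simple_cycle E c,
        forall i, count (fun e => e \in S i) (cycle_edges c) = 1%N &
        exists2 e, e \in cycle_edges c & (e \in S ord0) && (b \in e)] in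
  (exists2 c, good c & size c = L) ->
  (forall c, good c -> (L <= size c)%N) ->
  [/\ That F E S b L \is L.-homog, That F E S b L != 0 &
      forall l, (1 <= l < L)%N -> That F E S b l = 0].
Proof.
move=> F2 E2 _ good [c adm_c <-] min_c; split.
- exact: That_homog.
- exact: That_neq0 adm_c.
- by move=> l /andP[_]; apply: That_eq0.
Qed.
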